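(* Let $\Sigma$ be a set and let $1\le p<\infty$. Suppose $s$ is a sane scoring function on $\Sigma$ such that the distance $d$ on $\Sigma$ defined by $d(a,b)=(s(a,a)-s(a,b))^{1/p}$ is a quasi-metric on $\Sigma$, and suppose $\gamma,\delta\in\Gamma_{\mathrm{CL}}(\Sigma)$ satisfy, for all $a,b\in\Sigma$, \[\gamma(b)-\gamma(a)\le d^p(a,b)\quad\text{and}\quad s(a,a)+\delta(a)-s(b,b)-\delta(b)\le d^p(a,b).\] Let $S$ be the global similarity with respect to $s$, $\gamma$ and $\delta$, and let $\alpha(x)=\gamma(x)^{1/p}$ and $\beta(x)=(S(x,x)+\delta(x))^{1/p}$ for all $x\in\Sigma^+$. Then the $\ell^p$ edit distance $D$ on $\Sigma^*$ extending $d$, $\alpha$ and $\beta$ is a quasi-metric on $\Sigma^*$, and for all $x,y\in\Sigma^*$, \[D(x,y)=\big(S(x,x)-S(x,y)\big)^{1/p}.\]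
   Context: $\Sigma^*$ is the free monoid on $\Sigma$ (finite words, concatenation, empty word $e$), $\Sigma^+=\Sigma^*\setminus\{e\}$; for $w=w_1\cdots w_n$, $|w|=n$, $\bar w_k=w_1\cdots w_k$, $\bar w_0=e$. A quasi-metric on $X$ is a map $q:X\times X\to\mathbb{R}_{\ge0}$ with $q(x,y)=q(y,x)=0\iff x=y$ and $q(x,z)\le q(x,y)+q(y,z)$. A sane scoring function $s:X\times X\to\mathbb{R}$ satisfies $s(x,x)>0$, $s(x,x)\ge s(x,y)$, $s(x,x)\ge s(y,x)$ for all $x,y$. A gap penalty over $\Sigma^+$ is a positive function $\gamma:\Sigma^+\to\mathbb{R}$ with $\gamma(u)+\gamma(v)\ge\gamma(uv)$; $\Gamma(\Sigma)$ is the set of these. $\gamma$ is increasing if $\gamma(uxv)\ge\gamma(uv)$ for all $u,v,x\in\Sigma^*$. $\Gamma_{\mathrm{CL}}(\Sigma)$ (composition-length gap penalties) is the set of increasing $\gamma\in\Gamma(\Sigma)$ of the form $\gamma(z)=\sum_i\phi(z_i)+\psi(|z|)$ for some $\phi:\Sigma\to\mathbb{R}$, $\psi:\mathbb{N}\to\mathbb{R}$. Global similarity: $S(e,e)=0$, $S(e,\bar y_j)=-\gamma(\bar y_j)$, $S(\bar x_i,e)=-\delta(\bar x_i)$, and for $i,j\ge1$ \[S(\bar x_i,\bar y_j)=\max\Big\{S(\bar x_{i-1},\bar y_{j-1})+s(x_i,y_j),\ \max_{1\le k\le j}\{S(\bar x_i,\bar y_{j-k})-\gamma(y_{j-k+1}\cdots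 y_j)\},\ \max_{1\le k\le i}\{S(\bar x_{i-k},\bar y_j)-\delta(x_{i-k+1}\cdots x_i)\}\Big\},\] $S(x,y)=S(\bar x_{|x|},\bar y_{|y|})$. $\ell^p$ edit distance extending $d$, $\alpha$, $\beta$ (with $\alpha^p,\beta^p\in\Gamma(\Sigma)$): $D(e,e)=0$, $D(e,\bar y_j)=\alpha(\bar y_j)$, $D(\bar x_i,e)=\beta(\bar x_i)$, and for $i,j\ge1$ \[D(\bar x_i,\bar y_j)=\Big(\min\Big\{D^p(\bar x_{i-1},\bar y_{j-1})+d^p(x_i,y_j),\ \min_{1\le k\le j}\{D^p(\bar x_i,\bar y_{j-k})+\alpha^p(y_{j-k+1}\cdots y_j)\},\ \min_{1\le k\le i}\{D^p(\bar x_{i-k},\bar y_j)+\beta^p(x_{i-k+1}\cdots x_i)\}\Big\}\Big)^{1/p},\] $D(x,y)=D(\bar x_{|x|},\bar y_{|y|})$. *)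

From mathcomp Require Import all_boot all_order all_algebra.
From mathcomp Require Import reals exp.
Set Implicit Arguments. Unset Strict Implicit. Unset Printing Implicit Defensive.
Import Order.TTheory GRing.Theory Num.Theory.
Local Open Scope ring_scope.

Section Defs.
Variable R : realType.

Definition is_quasimetric (X : Type) (q : X -> X -> R) : Prop :=
  [/\ (forall x y, 0 <= q x y),
      (forall x y, (q x y = 0 /\ q y x = 0) <-> x = y) &
      (forall x y z, q x z <= q x y + q y z)].

Definition sane (T : Type) (s : T -> T -> R) : Prop :=
  forall x y, [/\ 0 < s x x, s x y <= s x x & s y x <= s x x].

(* gap penalties over Sigma^+ (functions on words; the value at the empty
   word is irrelevant) *)
Definition gap_penalty (T : Type) (g : seq T -> R) : Prop :=
  (forall u : seq T, u <> [::] -> 0 < g u) /\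
  (forall u v : seq T, u <> [::] -> v <> [::] -> g (u ++ v) <= g u + g v).

Definition increasing_gap (T : Type) (g : seq T -> R) : Prop :=
  forall u x v : seq T, u ++ v <> [::] -> g (u ++ v) <= g (u ++ x ++ v).

Definition gap_CL (T : Type) (g : seq T -> R) : Prop :=
  [/\ gap_penalty g, increasing_gap g &
      exists (phi : T -> R) (psi : nat -> R),
        forall z : seq T, z <> [::] -> g z = \sum_(a <- z) phi a + psi (size z)].

Fixpoint splitlast (T : Type) (s : seq T) : option (seq T * T) :=
  match s with
  | [::] => None
  | a :: s' => match splitlast s' with
               | None => Some ([::], a)
               | Some (u, b) => Some (a :: u, b)
               end
  end.

Definition maxl (a : R) (l : seq R) := foldr Num.max a l.
Definition minl (a : R) (l : seq R) := foldr Num.min a l.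

Fixpoint Sfuel (T : Type) (s : T -> T -> R) (g d : seq T -> R) (n : nat)
    (x y : seq T) : R :=
  match n with
  | 0%N => 0
  | n'.+1 =>
    match splitlast x, splitlast y with
    | None, None => 0
    | None, Some _ => - g y
    | Some _, None => - d x
    | Some (x', a), Some (y', b) =>
      maxl (Sfuel s g d n' x' y' + s a b)
        ([seq Sfuel s g d n' x (take m y) - g (drop m y) | m <- iota 0 (size y)] ++
         [seq Sfuel s g d n' (take m x) y - d (drop m x) | m <- iota 0 (size x)])
    end
  end.

Definition globalS (T : Type) (s : T -> T -> R) (g d : seq T -> R)
  (x y : seq T) : R := Sfuel s g d (size x + size y) x y.

Fixpoint Dfuel (T : Type) (p : R) (dist : T -> T -> R) (al be : seq T -> R)
    (n : nat) (x y : seq T) : R :=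
  match n with
  | 0%N => 0
  | n'.+1 =>
    match splitlast x, splitlast y with
    | None, None => 0
    | None, Some _ => al y
    | Some _, None => be x
    | Some (x', a), Some (y', b) =>
      powR (minl (powR (Dfuel p dist al be n' x' y') p + powR (dist a b) p)
        ([seq powR (Dfuel p dist al be n' x (take m y)) p
              + powR (al (drop m y)) p | m <- iota 0 (size y)] ++
         [seq powR (Dfuel p dist al be n' (take m x) y) p
              + powR (be (drop m x)) p | m <- iota 0 (size x)])) p^-1
    end
  end.

Definition lp_edit (T : Type) (p : R) (dist : T -> T -> R) (al be : seq T -> R)
  (x y : seq T) : R := Dfuel p dist al be (size x + size y) x y.

End Defs.

From mathcomp Require Import all_boot all_order all_algebra.
From mathcomp Require Import reals exp.
From mathcomp Require Import classical_sets convex hoelder.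
From mathcomp Require Import ring lra zify.
From Stdlib Require Import Permutation.
Import Order.TTheory GRing.Theory Num.Theory.
Local Open Scope ring_scope.
Set Implicit Arguments. Unset Strict Implicit.

(* [S x x - S x y] is the least cost of an alignment of [x] with [y] in which a
   match of [a] with [b] costs [d(a,b)^p] and each gap region between two matches
   pays [beta^p] on its deleted letters and [gamma] on its inserted ones; [D] is the
   p-th root of this cost.  A cost-zero alignment has no gaps and only matches at
   d-distance zero, which gives separation.  For the triangle inequality, compose
   optimal alignments of [x] with [y] and of [y] with [z]: where a letter of [y] is
   matched on both sides, convexity of [t ^ p] gives
   [d(a,c)^p <= A d(a,b)^p + B d(b,c)^p] with weights [A, B >= 1] chosen from
   [u = D(x,y)] and [v = D(y,z)]; elsewhere the penalties, which only depend on the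
   multiset of letters, absorb the matched letters thanks to the two hypotheses on
   [gamma] and [delta].  Hence [D(x,z)^p <= A u^p + B v^p = (u + v)^p]. *)

Section powR_facts.
Variable R : realType.
Implicit Types p u v w a b e : R.

Lemma powRVK p e : 0 < p -> 0 <= e -> powR (powR e p^-1) p = e.
Proof. by move=> p0 e0; rewrite -powRrM mulVf ?gt_eqF // powRr1. Qed.

Lemma powRKV p e : 0 < p -> 0 <= e -> powR (powR e p) p^-1 = e.
Proof. by move=> p0 e0; rewrite -powRrM mulfV ?gt_eqF // powRr1. Qed.

Lemma powR0V p : 0 < p -> powR 0 p^-1 = 0 :> R.
Proof. by move=> p0; rewrite powR0 // invr_eq0 gt_eqF. Qed.

Lemma powR_pred p w : 0 < w -> powR w p = powR w (p - 1) * w.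
Proof.
move=> w0; have := @powRD _ w (p - 1) 1; rewrite subrK powRr1 ?ltW // => -> //.
by rewrite (gt_eqF w0) implybT.
Qed.

(* Jensen for [powR ^~ p] at [a + b = t (a / t) + (1 - t) (b / (1 - t))],
   with [t = u / (u + v)]. *)
Lemma powR_addr_le p u v a b : 1 <= p -> 0 < u -> 0 < v -> 0 <= a -> 0 <= b ->
  powR (a + b) p <=
  powR ((u + v) / u) (p - 1) * powR a p + powR ((u + v) / v) (p - 1) * powR b p.
Proof.
move=> p1 u0 v0 a0 b0.
have uv0 : 0 < u + v by rewrite addr_gt0.
have t0 : 0 <= u / (u + v) by rewrite divr_ge0 // ltW.
have t1 : u / (u + v) <= 1 by rewrite ler_pdivrMr // mul1r lerDl ltW.
have onem_t : 1 - u / (u + v) = v / (u + v) by field; rewrite lt0r_neq0.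
have J := convex_powR p1 (interval_inference.Itv01 t0 t1)
  (x := a * ((u + v) / u)) (y := b * ((u + v) / v)).
have /J {}J : a * ((u + v) / u) \in `[0, +oo[%classic.
  by rewrite inE /= in_itv /= andbT mulr_ge0 // divr_ge0 // ltW.
have /J {}J : b * ((u + v) / v) \in `[0, +oo[%classic.
  by rewrite inE /= in_itv /= andbT mulr_ge0 // divr_ge0 // ltW.
move: J; rewrite [X in powR X _]convRE convRE /= /unstable.onem onem_t.
have -> : u / (u + v) * (a * ((u + v) / u)) + v / (u + v) * (b * ((u + v) / v))
          = a + b by field; rewrite !lt0r_neq0.
have scale w c : 0 < w -> 0 <= c -> w^-1 * powR (c * w) p = powR w (p - 1) * powR c p.
  by move=> w0 c0; rewrite (powRM _ c0 (ltW w0)) (powR_pred p w0); field; rewrite gt_eqF.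
move=> /le_trans; apply.
by rewrite -[u / _]invf_div -[v / _]invf_div !scale // divr_gt0.
Qed.

Lemma powR_ratio_ge1 p u v : 1 <= p -> 0 < u -> 0 <= v -> 1 <= powR ((u + v) / u) (p - 1).
Proof.
move=> p1 u0 v0; rewrite -[leLHS](powRr0 ((u + v) / u)); apply: ler_powR; last by lra.
by rewrite ler_pdivlMr // mul1r lerDl.
Qed.

Lemma powR_ratio_sum p u v : 0 < u -> 0 < v ->
  powR ((u + v) / u) (p - 1) * powR u p + powR ((u + v) / v) (p - 1) * powR v p
  = powR (u + v) p.
Proof.
move=> u0 v0; have uv0 : 0 < u + v by rewrite addr_gt0.
rewrite (powR_pred p u0) (powR_pred p v0) (powR_pred p uv0) !mulrA.
rewrite -!powRM ?divr_ge0 ?ltW // !divfK ?gt_eqF //.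
by rewrite mulrDr.
Qed.

End powR_facts.
Section gap0.
Variables (R : realType) (T : Type).
Implicit Types (g : seq T -> R) (u v w r : seq T).

Definition gap0 g w : R := if w is [::] then 0 else g w.

Lemma gap0_neq_nil g w : w <> [::] -> gap0 g w = g w.
Proof. by case: w. Qed.

Lemma gap0_ge0 g w : gap_penalty g -> 0 <= gap0 g w.
Proof. by case=> g0 _; case: w => // a w; apply/ltW/g0. Qed.

Lemma gap0_le0 g w : gap_penalty g -> gap0 g w <= 0 -> w = [::].
Proof. by case=> g0 _; case: w => // a w /=; rewrite leNgt g0. Qed.

Lemma gap0_cat_le g u v : gap_penalty g -> gap0 g (u ++ v) <= gap0 g u + gap0 g v.
Proof.
case=> _ gsub; case: u => [|a u]; first by rewrite add0r.
by case: v => [|b v]; [rewrite cats0 addr0 | exact: gsub].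
Qed.

Lemma big_Permutation (f : T -> R) u v :
  Permutation u v -> \sum_(a <- u) f a = \sum_(a <- v) f a.
Proof.
elim=> [|a u' v' _ IH|a b u'|u1 u2 u3 _ -> _ ->] //; rewrite ?big_cons ?IH //.
by rewrite addrCA.
Qed.

Lemma gap0_Permutation g u v : gap_CL g -> Permutation u v -> gap0 g u = gap0 g v.
Proof.
case=> _ _ [phi [psi gE]] Puv.
case: u Puv => [|a u] Puv; first by rewrite (Permutation_nil Puv).
case: v Puv => [|b v] Puv; first by have := Permutation_nil (Permutation_sym Puv).
by rewrite /= !gE // (big_Permutation phi Puv); have := Permutation_length Puv; rewrite /= => ->.
Qed.

Lemma gap0_catr_ge g u r : gap_CL g -> gap0 g u <= gap0 g (u ++ r).
Proof.
case=> gp ginc _; case: u => [|a u]; first exact: gap0_ge0.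
by have := ginc (a :: u) r [::]; rewrite !cats0; apply.
Qed.

Lemma gap0_Permutation_le g u r v : gap_CL g -> Permutation (u ++ r) v -> gap0 g u <= gap0 g v.
Proof. by move=> gCL Puv; rewrite -(gap0_Permutation gCL Puv) gap0_catr_ge. Qed.

(* In the form [sum phi + psi (size)], exchanging letters one at a time changes
   the penalty by the single-letter differences. *)
Lemma gap0_map_le (P : Type) g (f1 f2 : P -> T) (h : P -> R) (l : seq P) : gap_CL g ->
  (forall q, g [:: f1 q] - g [:: f2 q] <= h q) ->
  gap0 g (map f1 l) <= gap0 g (map f2 l) + \sum_(q <- l) h q.
Proof.
case=> _ _ [phi [psi gE]] gh.
case: l => [|q l]; first by rewrite big_nil addr0.
have phih q' : phi (f1 q') - phi (f2 q') <= h q'.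
  by have := gh q'; rewrite !gE // !big_seq1 /= opprD addrACA subrr addr0.
have : \sum_(q' <- l) (phi (f1 q') - phi (f2 q')) <= \sum_(q' <- l) h q'.
  by apply: ler_sum => q' _.
by rewrite sumrB /= !gE //= !size_map !big_cons !big_map; have := phih q; lra.
Qed.

End gap0.

Section selfscore.
Variables (R : realType) (T : Type) (s : T -> T -> R).

Definition selfscore (x : seq T) : R := \sum_(a <- x) s a a.

Lemma selfscore_cat u v : selfscore (u ++ v) = selfscore u + selfscore v.
Proof. exact: big_cat. Qed.

Lemma selfscore_rcons u a : selfscore (rcons u a) = selfscore u + s a a.
Proof. by rewrite -cats1 selfscore_cat /selfscore big_seq1. Qed.

Hypothesis s_sane : sane s.

Lemma selfscore_ge0 u : 0 <= selfscore u.
Proof. by apply: sumr_ge0 => a _; case: (s_sane a a) => /ltW. Qed.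

Lemma gap_CL_selfscoreD (d : seq T -> R) :
  gap_CL d -> gap_CL (fun w => selfscore w + d w).
Proof.
move=> [[d0 dsub] dinc [phi [psi dE]]]; split; [split|..].
- by move=> u /d0 u0; rewrite ltr_wpDl // selfscore_ge0.
- by move=> u v u0 v0; rewrite selfscore_cat; have := dsub u v u0 v0; lra.
- move=> u x v uv0; rewrite !selfscore_cat.
  by have := dinc u x v uv0; have := selfscore_ge0 x; lra.
- exists (fun a => s a a + phi a), psi => z z0.
  by rewrite dE // big_split /= addrA.
Qed.

End selfscore.

Section maxl.
Variable R : realType.
Implicit Types (a b c v : R) (l : seq R).

Lemma maxl_ge_seed a l : a <= maxl a l.
Proof. by elim: l => //= v l IH; rewrite le_max IH orbT. Qed.

Lemma maxl_ge a l v : v \in l -> v <= maxl a l.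
Proof.
elim: l => //= w l IH; rewrite inE le_max => /predU1P[->|/IH ->]; last exact: orbT.
by rewrite lexx.
Qed.

Lemma maxl_le a l b : a <= b -> {in l, forall v, v <= b} -> maxl a l <= b.
Proof.
move=> ab; elim: l => //= v l IH lb.
by rewrite ge_max lb ?mem_head // IH // => w wl; rewrite lb // inE wl orbT.
Qed.

Lemma maxl_seed_or_mem a l : maxl a l = a \/ maxl a l \in l.
Proof.
elim: l => [|w l IH] /=; first by left.
case: (leP w (maxl a l)) => _; last by right; rewrite mem_head.
by case: IH => [|ml]; [left | right; rewrite inE ml orbT].
Qed.

Lemma minl_subr c a l : minl (c - a) [seq c - v | v <- l] = c - maxl a l.
Proof.
elim: l => //= v l ->.
by case: (leP v (maxl a l)) => ?; [rewrite min_r | rewrite min_l]; lra.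
Qed.

End maxl.

Lemma splitlast_rcons (T : Type) (x : seq T) a : splitlast (rcons x a) = Some (x, a).
Proof. by elim: x => //= b x ->. Qed.

Lemma drop_neq_nil (T : Type) (x : seq T) k : (k < size x)%N -> drop k x <> [::].
Proof. by move=> kx x0; have := size_drop k x; rewrite x0 /=; lia. Qed.

Lemma rcons_neq_nil (T : Type) (x : seq T) a : rcons x a <> [::].
Proof. by case: x. Qed.
Section global_similarity.
Variables (R : realType) (T : Type) (s : T -> T -> R) (g d : seq T -> R).
Implicit Types (x y u w : seq T) (a b : T).

Local Notation S := (globalS s g d).

Lemma Sfuel_rcons n x' a y' b :
  let x := rcons x' a in let y := rcons y' b in
  Sfuel s g d n.+1 x y = maxl (Sfuel s g d n x' y' + s a b)
    ([seq Sfuel s g d n x (take m y) - g (drop m y) | m <- iota 0 (size y)] ++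
     [seq Sfuel s g d n (take m x) y - d (drop m x) | m <- iota 0 (size x)]).
Proof. by rewrite /= !splitlast_rcons. Qed.

Lemma Sfuel_indep n m x y : (size x + size y <= n)%N -> (size x + size y <= m)%N ->
  Sfuel s g d n x y = Sfuel s g d m x y.
Proof.
elim: n m x y => [|n IH] [|m] x y; try by case: x => [|? ?]; case: y.
case/lastP: x => [|x' a]; case/lastP: y => [|y' b] Hn Hm;
  try by rewrite /= ?splitlast_rcons.
rewrite !Sfuel_rcons; have sx := size_rcons x' a; have sy := size_rcons y' b.
congr maxl; first by congr (_ + _); apply: IH; lia.
by congr (_ ++ _); apply/eq_in_map => k; rewrite mem_iota => /andP[_ Hk];
  congr (_ - _); apply: IH; rewrite ?size_takel; lia.
Qed.

Lemma Sfuel_globalS n x y : (size x + size y <= n)%N -> Sfuel s g d n x y = S x y.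
Proof. by move=> Hn; apply: Sfuel_indep. Qed.

Lemma globalS_nil : S [::] [::] = 0.
Proof. by []. Qed.

Lemma globalS_nil_l y : y <> [::] -> S [::] y = - g y.
Proof. by case/lastP: y => // y' b _; rewrite /globalS size_rcons /= splitlast_rcons. Qed.

Lemma globalS_nil_r x : x <> [::] -> S x [::] = - d x.
Proof. by case/lastP: x => // x' a _; rewrite /globalS addn0 size_rcons /= splitlast_rcons. Qed.

Lemma globalS_rcons x' a y' b :
  let x := rcons x' a in let y := rcons y' b in
  S x y = maxl (S x' y' + s a b)
    ([seq S x (take m y) - g (drop m y) | m <- iota 0 (size y)] ++
     [seq S (take m x) y - d (drop m x) | m <- iota 0 (size x)]).
Proof.
move=> x y; rewrite {1}/globalS.
have -> : (size x + size y = (size x' + (size y').+1).+1)%N by rewrite !size_rcons.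
rewrite Sfuel_rcons.
have sx := size_rcons x' a; have sy := size_rcons y' b.
congr maxl; first by rewrite Sfuel_globalS //; lia.
by congr (_ ++ _); apply/eq_in_map => k; rewrite mem_iota => /andP[_ Hk];
  rewrite Sfuel_globalS // ?size_takel; lia.
Qed.

Lemma globalS_rconsP x' a y' b :
  let x := rcons x' a in let y := rcons y' b in
  [\/ S x y = S x' y' + s a b,
      exists2 m, (m < size y)%N & S x y = S x (take m y) - g (drop m y) |
      exists2 m, (m < size x)%N & S x y = S (take m x) y - d (drop m x)].
Proof.
move=> x y; have SE : S x y = maxl (S x' y' + s a b) _ := globalS_rcons x' a y' b.
set l := (_ ++ _) in SE.
case: (maxl_seed_or_mem (S x' y' + s a b) l); rewrite -SE; first by constructor 1.
rewrite mem_cat => /orP[] /mapP[k]; rewrite mem_iota => /andP[_ Hk] ->.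
- by constructor 2; exists k.
- by constructor 3; exists k.
Qed.

Lemma globalS_match x' a y' b : S x' y' + s a b <= S (rcons x' a) (rcons y' b).
Proof. by rewrite globalS_rcons; apply: maxl_ge_seed. Qed.

Lemma globalS_ins x w I : gap_penalty g -> I <> [::] -> S x w - g I <= S x (w ++ I).
Proof.
move=> [_ gsub] I0.
case/lastP: x => [|x' a].
  case: w => [|c w]; first by rewrite globalS_nil globalS_nil_l //; lra.
  by rewrite !globalS_nil_l //; have := gsub (c :: w) I ltac:(by []) I0; lra.
case/lastP: I I0 => // I' b _; rewrite -rcons_cat globalS_rcons.
apply: maxl_ge; rewrite mem_cat; apply/orP; left; apply/mapP; exists (size w).
  by rewrite mem_iota size_rcons size_cat; lia.
by rewrite rcons_cat take_size_cat // drop_size_cat.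
Qed.

Lemma globalS_del u w D : gap_penalty d -> D <> [::] -> S u w - d D <= S (u ++ D) w.
Proof.
move=> [_ dsub] D0.
case/lastP: w => [|w' b].
  case: u => [|c u]; first by rewrite globalS_nil globalS_nil_r //; lra.
  by rewrite !globalS_nil_r //; have := dsub (c :: u) D ltac:(by []) D0; lra.
case/lastP: D D0 => // D' a _; rewrite -rcons_cat globalS_rcons.
apply: maxl_ge; rewrite mem_cat; apply/orP; right; apply/mapP; exists (size u).
  by rewrite mem_iota size_rcons size_cat; lia.
by rewrite rcons_cat take_size_cat // drop_size_cat.
Qed.

Hypotheses (s_sane : sane s) (g_gap : gap_penalty g) (d_gap : gap_penalty d).

Lemma Sfuel_le_selfscore n x y : Sfuel s g d n x y <= selfscore s x.
Proof.
have [g0 _] := g_gap; have [d0 _] := d_gap.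
elim: n x y => [|n IH] x y; first exact: selfscore_ge0.
case/lastP: x => [|x' a]; case/lastP: y => [|y' b].
- exact: selfscore_ge0.
- rewrite /= splitlast_rcons /selfscore big_nil.
  by have := g0 _ (@rcons_neq_nil _ y' b); lra.
- rewrite /= splitlast_rcons.
  by have := d0 _ (@rcons_neq_nil _ x' a); have := selfscore_ge0 s_sane (rcons x' a); lra.
rewrite Sfuel_rcons; apply: maxl_le => [|v].
  by rewrite selfscore_rcons lerD //; case: (s_sane a b).
rewrite mem_cat => /orP[] /mapP[k]; rewrite mem_iota => /andP[_ Hk] ->.
- by have := g0 _ (drop_neq_nil Hk); have := IH (rcons x' a) (take k (rcons y' b)); lra.
- rewrite -[in leRHS](cat_take_drop k (rcons x' a)) selfscore_cat.
  have := d0 _ (drop_neq_nil Hk); have := IH (take k (rcons x' a)) (rcons y' b).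
  by have := selfscore_ge0 s_sane (drop k (rcons x' a)); lra.
Qed.

Lemma globalS_le_selfscore x y : S x y <= selfscore s x.
Proof. exact: Sfuel_le_selfscore. Qed.

Lemma globalS_diag x : S x x = selfscore s x.
Proof.
apply/le_anti; rewrite globalS_le_selfscore /=.
elim/last_ind: x => [|x a IH]; first by rewrite globalS_nil /selfscore big_nil.
by rewrite selfscore_rcons (le_trans _ (globalS_match x a x a)) ?lerD2r.
Qed.

End global_similarity.
Section lp_edit_formula.
Variables (R : realType) (T : Type) (p : R) (s : T -> T -> R) (g d : seq T -> R).
Hypotheses (p_gt0 : 0 < p) (s_sane : sane s).
Hypotheses (g_gap : gap_penalty g) (d_gap : gap_penalty d).
Implicit Types (x y : seq T) (a b : T).

Local Notation S := (globalS s g d).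
Local Notation Dfuel := (Dfuel p (fun a b => powR (s a a - s a b) p^-1)
  (fun w => powR (g w) p^-1) (fun w => powR (S w w + d w) p^-1)).

Lemma Dfuel_rcons n x' a y' b :
  let x := rcons x' a in let y := rcons y' b in
  Dfuel n.+1 x y = powR (minl
    (powR (Dfuel n x' y') p + powR (powR (s a a - s a b) p^-1) p)
    ([seq powR (Dfuel n x (take m y)) p + powR (powR (g (drop m y)) p^-1) p
       | m <- iota 0 (size y)] ++
     [seq powR (Dfuel n (take m x) y) p
            + powR (powR (S (drop m x) (drop m x) + d (drop m x)) p^-1) p
       | m <- iota 0 (size x)])) p^-1.
Proof. by rewrite /= !splitlast_rcons. Qed.

Lemma Dfuel_selfscore n x y : (size x + size y <= n)%N ->
  Dfuel n x y = powR (selfscore s x - Sfuel s g d n x y) p^-1.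
Proof.
have [g0 _] := g_gap; have [d0 _] := d_gap.
have sane_ge0 a b : 0 <= s a a - s a b by rewrite subr_ge0; case: (s_sane a b).
have Sfuel_le := Sfuel_le_selfscore s_sane g_gap d_gap.
elim: n x y => [|n IH] x y.
  by case: x => // ; case: y => // _; rewrite /= /selfscore big_nil subr0 powR0V.
case/lastP: x => [|x' a]; case/lastP: y => [|y' b] Hn.
- by rewrite /= /selfscore big_nil subr0 powR0V.
- by rewrite /= splitlast_rcons /selfscore big_nil sub0r opprK.
- by rewrite /= splitlast_rcons globalS_diag // opprK.
have sx := size_rcons x' a; have sy := size_rcons y' b.
rewrite Dfuel_rcons Sfuel_rcons; congr powR.
rewrite -minl_subr map_cat -!map_comp; congr minl.
  rewrite IH; last by lia.
  by rewrite !powRVK // ?subr_ge0 ?Sfuel_le // selfscore_rcons; ring.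
congr (_ ++ _); apply/eq_in_map => k; rewrite mem_iota => /andP[_ Hk] /=;
  rewrite IH ?size_takel; try lia.
- rewrite !powRVK ?subr_ge0 ?Sfuel_le ?(ltW (g0 _ (drop_neq_nil Hk))) //; ring.
- have dk0 := ltW (d0 _ (drop_neq_nil Hk)).
  have sk0 := selfscore_ge0 s_sane (drop k (rcons x' a)).
  have := selfscore_cat s (take k (rcons x' a)) (drop k (rcons x' a)).
  rewrite cat_take_drop globalS_diag // !powRVK ?subr_ge0 ?Sfuel_le ?addr_ge0 // => ->.
  ring.
Qed.

Lemma lp_edit_globalS x y :
  lp_edit p (fun a b => powR (s a a - s a b) p^-1) (fun w => powR (g w) p^-1)
    (fun w => powR (S w w + d w) p^-1) x y = powR (S x x - S x y) p^-1.
Proof. by rewrite /lp_edit Dfuel_selfscore // Sfuel_globalS // globalS_diag. Qed.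

End lp_edit_formula.
Lemma Forall2_antisym (T : Type) (r : T -> T -> Prop) (x y : seq T) :
  (forall a b, r a b -> r b a -> a = b) -> List.Forall2 r x y -> List.Forall2 r y x -> x = y.
Proof.
move=> antisym Fxy; elim: Fxy => // a b x' y' rab _ IH Fyx.
by inversion Fyx; subst; rewrite (antisym a b) // IH.
Qed.

Inductive column (T : Type) := Mat of T & T | Del of T | Ins of T.

Section alignments.
Variable T : Type.
Implicit Types (c r : seq (column T)) (w : seq T).

Fixpoint src c : seq T :=
  match c with
  | [::] => [::]
  | Mat a _ :: c' | Del a :: c' => a :: src c'
  | Ins _ :: c' => src c'
  end.

Fixpoint tgt c : seq T :=
  match c with
  | [::] => [::]
  | Mat _ b :: c' | Ins b :: c' => b :: tgt c'
  | Del _ :: c' => tgt c'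
  end.

Fixpoint deleted c : seq T :=
  match c with
  | [::] => [::]
  | Del a :: c' => a :: deleted c'
  | _ :: c' => deleted c'
  end.

Fixpoint inserted c : seq T :=
  match c with
  | [::] => [::]
  | Ins b :: c' => b :: inserted c'
  | _ :: c' => inserted c'
  end.

Fixpoint matched c : seq (T * T) :=
  match c with
  | [::] => [::]
  | Mat a b :: c' => (a, b) :: matched c'
  | _ :: c' => matched c'
  end.

Lemma src_cat c r : src (c ++ r) = src c ++ src r.
Proof. by elim: c => //= -[a b|a|b] c ->. Qed.

Lemma tgt_cat c r : tgt (c ++ r) = tgt c ++ tgt r.
Proof. by elim: c => //= -[a b|a|b] c ->. Qed.

Lemma src_Ins w : src [seq Ins b | b <- w] = [::].
Proof. by elim: w. Qed.

Lemma tgt_Ins w : tgt [seq Ins b | b <- w] = w.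
Proof. by elim: w => //= b w ->. Qed.

Lemma src_Del w : src [seq Del a | a <- w] = w.
Proof. by elim: w => //= a w ->. Qed.

Lemma tgt_Del w : tgt [seq Del a | a <- w] = [::].
Proof. by elim: w. Qed.

Lemma src_Permutation c : Permutation (src c) (deleted c ++ map fst (matched c)).
Proof. by elim: c => //= -[a b|a|b] c IH //=; [apply: Permutation_cons_app | apply: perm_skip]. Qed.

Lemma tgt_Permutation c : Permutation (tgt c) (inserted c ++ map snd (matched c)).
Proof. by elim: c => //= -[a b|a|b] c IH //=; [apply: Permutation_cons_app | apply: perm_skip]. Qed.

End alignments.

Section alignment_cost.
Variables (R : realType) (T : Type) (dp : T -> T -> R) (gd gi : seq T -> R).
Implicit Types (c r : seq (column T)) (w D I : seq T).

(* [D] and [I] collect the deletions and insertions since the last match, so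
   that each gap region between two matches pays [gd] once on its deleted
   letters and [gi] once on its inserted letters. *)
Fixpoint cost_from c D I : R :=
  match c with
  | [::] => gap0 gd D + gap0 gi I
  | Mat a b :: c' => gap0 gd D + gap0 gi I + dp a b + cost_from c' [::] [::]
  | Del a :: c' => cost_from c' (rcons D a) I
  | Ins b :: c' => cost_from c' D (rcons I b)
  end.

Definition cost c := cost_from c [::] [::].

Lemma cost_from_cat_Mat c a b r D I :
  cost_from (c ++ Mat a b :: r) D I = cost_from c D I + dp a b + cost r.
Proof. by elim: c D I => [|[a' b'|a'|b'] c IH] D I //=; rewrite IH; ring. Qed.

Lemma cost_from_Ins w D I : cost_from [seq Ins b | b <- w] D I = gap0 gd D + gap0 gi (I ++ w).
Proof. by elim: w I => [|b w IH] I /=; rewrite ?cats0 // IH cat_rcons. Qed.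

Lemma cost_from_Del w D I : cost_from [seq Del a | a <- w] D I = gap0 gd (D ++ w) + gap0 gi I.
Proof. by elim: w D => [|a w IH] D /=; rewrite ?cats0 // IH cat_rcons. Qed.

Hypotheses (gd_gap : gap_penalty gd) (gi_gap : gap_penalty gi).

Lemma cost_from_cat_Ins_le c w D I :
  cost_from (c ++ [seq Ins b | b <- w]) D I <= cost_from c D I + gap0 gi w.
Proof.
elim: c D I => [|[a b|a|b] c IH] D I /=; try exact: IH.
  by rewrite cost_from_Ins; have := gap0_cat_le I w gi_gap; lra.
by have := IH [::] [::]; lra.
Qed.

Lemma cost_from_cat_Del_le c w D I :
  cost_from (c ++ [seq Del a | a <- w]) D I <= cost_from c D I + gap0 gd w.
Proof.
elim: c D I => [|[a b|a|b] c IH] D I /=; try exact: IH.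
  by rewrite cost_from_Del; have := gap0_cat_le D w gd_gap; lra.
by have := IH [::] [::]; lra.
Qed.

Lemma cost_from_ge c D I :
  \sum_(q <- matched c) dp q.1 q.2 + gap0 gd (D ++ deleted c) + gap0 gi (I ++ inserted c)
  <= cost_from c D I.
Proof.
elim: c D I => [|[a b|a|b] c IH] D I /=; try by rewrite -cat_rcons; apply: IH.
  by rewrite big_nil !cats0 add0r.
rewrite big_cons /=; have := IH [::] [::]; rewrite /=.
by have := gap0_cat_le D (deleted c) gd_gap; have := gap0_cat_le I (inserted c) gi_gap; lra.
Qed.

Hypothesis dp_ge0 : forall a b, 0 <= dp a b.

Lemma cost_from_ge0 c D I : 0 <= cost_from c D I.
Proof.
elim: c D I => [|[a b|a|b] c IH] D I //=; rewrite ?addr_ge0 ?gap0_ge0 //.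
Qed.

Fixpoint null_alignment c : Prop :=
  match c with
  | [::] => True
  | Mat a b :: c' => dp a b = 0 /\ null_alignment c'
  | _ => False
  end.

Lemma null_alignment_In c a b : null_alignment c -> List.In (Mat a b) c -> dp a b = 0.
Proof.
elim: c => //= -[a' b'|a'|b'] c IH //= [dab Nc] [[<- <-] // | ].
exact: IH.
Qed.

Lemma null_alignment_Forall2 c :
  null_alignment c -> List.Forall2 (fun a b => dp a b = 0) (src c) (tgt c).
Proof. by elim: c => //= -[a b|a|b] c IH //= [? ?]; constructor; last exact: IH. Qed.

Lemma cost_from_le0 c D I :
  cost_from c D I <= 0 -> [/\ D = [::], I = [::] & null_alignment c].
Proof.
have gd0 w : 0 <= gap0 gd w := gap0_ge0 w gd_gap.
have gi0 w : 0 <= gap0 gi w := gap0_ge0 w gi_gap.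
elim: c D I => [|[a b|a|b] c IH] D I /=.
- by move=> c0; split => //; [apply: gap0_le0 gd_gap _ | apply: gap0_le0 gi_gap _];
    have := gd0 D; have := gi0 I; lra.
- move=> c0; have := cost_from_ge0 c [::] [::]; have := dp_ge0 a b.
  have := gd0 D; have := gi0 I => *.
  have [_ _ Nc] := IH [::] [::] ltac:(lra).
  by split; [apply: gap0_le0 gd_gap _ | apply: gap0_le0 gi_gap _ | split => //]; lra.
- by case/IH; case: D.
- by case/IH => _; case: I.
Qed.

End alignment_cost.
Section dissimilarity.
Variables (R : realType) (T : Type) (s : T -> T -> R) (g d : seq T -> R).
Implicit Types (x y u v w D I : seq T) (c : seq (column T)) (a b : T).

Local Notation S := (globalS s g d).

(* [dissim], [del_pen] and [mismatch] are [D^p], [beta^p] and [d^p] of the paper. *)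
Definition dissim x y := selfscore s x - S x y.

Definition del_pen w := selfscore s w + d w.

Definition mismatch a b := s a a - s a b.

Local Notation cost_from := (cost_from mismatch del_pen g).
Local Notation cost := (cost mismatch del_pen g).

Lemma dissim_nil : dissim [::] [::] = 0.
Proof. by rewrite /dissim globalS_nil /selfscore big_nil subr0. Qed.

Lemma dissim_rcons_le x a y b : dissim (rcons x a) (rcons y b) <= dissim x y + mismatch a b.
Proof. by rewrite /dissim /mismatch selfscore_rcons; have := globalS_match s g d x a y b; lra. Qed.

Hypotheses (s_sane : sane s) (g_gap : gap_penalty g) (d_CL : gap_CL d).

Let d_gap : gap_penalty d. Proof. by case: d_CL. Qed.

Lemma gap_CL_del_pen : gap_CL del_pen.
Proof. exact: gap_CL_selfscoreD. Qed.

Let del_pen_gap : gap_penalty del_pen. Proof. by case: gap_CL_del_pen. Qed.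

Lemma mismatch_ge0 a b : 0 <= mismatch a b.
Proof. by rewrite subr_ge0; case: (s_sane a b). Qed.

Lemma dissim_ge0 x y : 0 <= dissim x y.
Proof. by rewrite subr_ge0 globalS_le_selfscore. Qed.

Lemma dissim_catr_le x w I : dissim x (w ++ I) <= dissim x w + gap0 g I.
Proof.
case: I => [|b I]; first by rewrite cats0 addr0.
by rewrite /dissim /=; have := globalS_ins s d x w (I := b :: I) g_gap ltac:(by []); lra.
Qed.

Lemma dissim_catl_le u w D : dissim (u ++ D) w <= dissim u w + gap0 del_pen D.
Proof.
case: D => [|a D]; first by rewrite cats0 addr0.
rewrite /dissim /del_pen /= selfscore_cat.
by have := globalS_del s g u w (D := a :: D) d_gap ltac:(by []); lra.
Qed.

Lemma dissim_le_cost_from c u v D I :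
  dissim (u ++ D ++ src c) (v ++ I ++ tgt c) <= dissim u v + cost_from c D I.
Proof.
elim: c u v D I => [|[a b|a|b] c IH] u v D I /=.
- rewrite !cats0; have := dissim_catl_le u (v ++ I) D.
  by have := dissim_catr_le u v I; lra.
- have := IH (rcons (u ++ D) a) (rcons (v ++ I) b) [::] [::].
  rewrite /= !cat_rcons !catA => /le_trans; apply.
  have := dissim_rcons_le (u ++ D) a (v ++ I) b; have := dissim_catl_le u (v ++ I) D.
  by have := dissim_catr_le u v I; lra.
- by have := IH u v (rcons D a) I; rewrite cat_rcons.
- by have := IH u v D (rcons I b); rewrite cat_rcons.
Qed.

Lemma dissim_le_cost c : dissim (src c) (tgt c) <= cost c.
Proof. by have := dissim_le_cost_from c [::] [::] [::] [::]; rewrite dissim_nil add0r. Qed.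

Lemma dissim_le_gaps x y : dissim x y <= gap0 del_pen x + gap0 g y.
Proof. by have := dissim_le_cost_from [::] [::] [::] x y; rewrite /= !cats0 dissim_nil add0r. Qed.

Lemma exists_alignment x y :
  exists c, [/\ src c = x, tgt c = y & cost c <= dissim x y].
Proof.
have [g0 _] := g_gap; have [d0 _] := d_gap.
move: {2}(size x + size y)%N (leqnn (size x + size y)) => n.
elim: n x y => [|n IH] x y Hn.
  by case: x Hn => // ; case: y => // _; exists [::]; rewrite dissim_nil /cost /= addr0.
case/lastP: x Hn => [|x' a] Hn.
  exists [seq Ins b | b <- y]; rewrite src_Ins tgt_Ins /cost cost_from_Ins /= add0r.
  split => //; case: y {Hn} => [|b y]; first by rewrite dissim_nil.
  by rewrite /dissim globalS_nil_l // /selfscore big_nil sub0r opprK.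
case/lastP: y Hn => [|y' b] Hn.
  exists [seq Del a | a <- rcons x' a]; rewrite src_Del tgt_Del /cost cost_from_Del /= addr0.
  split => //; rewrite /dissim globalS_nil_r ?opprK /del_pen; last exact: rcons_neq_nil.
  by case: x' {Hn} => [|? ?].
have sx := size_rcons x' a; have sy := size_rcons y' b.
case: (globalS_rconsP s g d x' a y' b) => [SE | [m Hm SE] | [m Hm SE]].
- have [c [Hs Ht Hc]] := IH x' y' ltac:(lia).
  exists (c ++ [:: Mat a b]); rewrite /cost cost_from_cat_Mat src_cat tgt_cat Hs Ht !cats1.
  split => //; move: Hc; rewrite /cost /dissim SE selfscore_rcons /mismatch /=; lra.
- have [c [Hs Ht Hc]] := IH (rcons x' a) (take m (rcons y' b)) ltac:(rewrite size_takel; lia).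
  exists (c ++ [seq Ins b | b <- drop m (rcons y' b)]).
  rewrite src_cat tgt_cat Hs Ht src_Ins tgt_Ins cats0 cat_take_drop; split => //.
  apply: le_trans (cost_from_cat_Ins_le mismatch del_pen g_gap c _ [::] [::]) _.
  by move: Hc; rewrite /cost /dissim SE (gap0_neq_nil g (drop_neq_nil Hm)); lra.
- have [c [Hs Ht Hc]] := IH (take m (rcons x' a)) (rcons y' b) ltac:(rewrite size_takel; lia).
  exists (c ++ [seq Del a | a <- drop m (rcons x' a)]).
  rewrite src_cat tgt_cat Hs Ht src_Del tgt_Del cats0 cat_take_drop; split => //.
  apply: le_trans (cost_from_cat_Del_le mismatch g del_pen_gap c _ [::] [::]) _.
  move: Hc; rewrite /cost /dissim SE (gap0_neq_nil del_pen (drop_neq_nil Hm)) /del_pen.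
  rewrite -[in selfscore s (rcons x' a)](cat_take_drop m (rcons x' a)) selfscore_cat; lra.
Qed.

End dissimilarity.
Section composition.
Variable T : Type.
Local Notation alignment := (seq (column T)).

(* [c1] aligns [x] with [y], [c2] aligns [y] with [z], and no letter of [y]
   is matched in both alignments. *)
Inductive unlinked : alignment -> alignment -> Prop :=
  | unlinked_nil : unlinked [::] [::]
  | unlinked_Del a c1 c2 : unlinked c1 c2 -> unlinked (Del a :: c1) c2
  | unlinked_Ins b c1 c2 : unlinked c1 c2 -> unlinked c1 (Ins b :: c2)
  | unlinked_MatDel a b c1 c2 : unlinked c1 c2 -> unlinked (Mat a b :: c1) (Del b :: c2)
  | unlinked_InsMat b c c1 c2 : unlinked c1 c2 -> unlinked (Ins b :: c1) (Mat b c :: c2)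
  | unlinked_InsDel b c1 c2 : unlinked c1 c2 -> unlinked (Ins b :: c1) (Del b :: c2).

Definition linked (c1 c2 : alignment) := exists g1 g2 a b c r1 r2,
  [/\ c1 = g1 ++ Mat a b :: r1, c2 = g2 ++ Mat b c :: r2 & unlinked g1 g2].

Lemma unlinked_tgt_src (c1 c2 : alignment) : unlinked c1 c2 -> tgt c1 = src c2.
Proof. by elim=> //= *; congr (_ :: _). Qed.

Lemma unlinked_matched_deleted (c1 c2 : alignment) : unlinked c1 c2 ->
  exists r, Permutation (map snd (matched c1) ++ r) (deleted c2).
Proof.
elim=> [|a c1' c2' _ [r Pr]|b c1' c2' _ [r Pr]|a b c1' c2' _ [r Pr]|b c c1' c2' _ [r Pr]
        |b c1' c2' _ [r Pr]] /=; try by [exists [::] | exists r].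
- by exists r; apply: perm_skip.
- by exists (b :: r); apply/Permutation_sym/Permutation_cons_app/Permutation_sym.
Qed.

Lemma unlinked_matched_inserted (c1 c2 : alignment) : unlinked c1 c2 ->
  exists r, Permutation (map fst (matched c2) ++ r) (inserted c1).
Proof.
elim=> [|a c1' c2' _ [r Pr]|b c1' c2' _ [r Pr]|a b c1' c2' _ [r Pr]|b c c1' c2' _ [r Pr]
        |b c1' c2' _ [r Pr]] /=; try by [exists [::] | exists r].
- by exists r; apply: perm_skip.
- by exists (b :: r); apply/Permutation_sym/Permutation_cons_app/Permutation_sym.
Qed.

Lemma unlinked_or_linked_cat (p1 p2 c1 c2 : alignment) :
  (forall g1 g2, unlinked g1 g2 -> unlinked (p1 ++ g1) (p2 ++ g2)) ->
  unlinked c1 c2 \/ linked c1 c2 ->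
  unlinked (p1 ++ c1) (p2 ++ c2) \/ linked (p1 ++ c1) (p2 ++ c2).
Proof.
move=> Up [/Up|[g1 [g2 [a [b [c [r1 [r2 [-> -> U]]]]]]]]]; [by left | right].
by exists (p1 ++ g1), (p2 ++ g2), a, b, c, r1, r2; rewrite -!catA; split => //; apply: Up.
Qed.

Lemma unlinked_or_linked (c1 c2 : alignment) :
  tgt c1 = src c2 -> unlinked c1 c2 \/ linked c1 c2.
Proof.
move: {2}(size c1 + size c2)%N (leqnn (size c1 + size c2)) => n.
elim: n c1 c2 => [|n IH] c1 c2 Hn Ht.
  by case: c1 c2 Hn Ht => [|? ?] [|? ?] // _ _; left; constructor.
have step p1 p2 c1' c2' : (size c1' + size c2' <= n)%N -> tgt c1' = src c2' ->
    (forall g1 g2, unlinked g1 g2 -> unlinked (p1 ++ g1) (p2 ++ g2)) ->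
    unlinked (p1 ++ c1') (p2 ++ c2') \/ linked (p1 ++ c1') (p2 ++ c2').
  by move=> Hn' Ht' Up; apply: unlinked_or_linked_cat Up (IH _ _ Hn' Ht').
case: c1 Hn Ht => [|[a b|a|b] c1] Hn Ht.
- case: c2 Hn Ht => [|[b' c|b'|c] c2] //= Hn Ht; first by left; constructor.
  apply: (step [::] [:: Ins c]);
    [move=> /=; lia | by [] | by move=> ? ? ?; constructor].
- case: c2 Hn Ht => [|[b' c|b'|c] c2] //= Hn.
  + by move=> [<- Ht]; right; exists [::], [::], a, b, c, c1, c2; split => //; constructor.
  + move=> [<- Ht]; apply: (step [:: Mat a b] [:: Del b]);
      [move=> /=; lia | by [] | by move=> ? ? ?; constructor].
  + move=> Ht; apply: (step [::] [:: Ins c] (Mat a b :: c1));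
      [move=> /=; lia | by [] | by move=> ? ? ?; constructor].
- apply: (step [:: Del a] [::]);
    [move: Hn => /=; lia | by [] | by move=> ? ? ?; constructor].
- case: c2 Hn Ht => [|[b' c|b'|c] c2] //= Hn.
  + move=> [<- Ht]; apply: (step [:: Ins b] [:: Mat b c]);
      [move=> /=; lia | by [] | by move=> ? ? ?; constructor].
  + move=> [<- Ht]; apply: (step [:: Ins b] [:: Del b]);
      [move=> /=; lia | by [] | by move=> ? ? ?; constructor].
  + move=> Ht; apply: (step [::] [:: Ins c] (Ins b :: c1));
      [move=> /=; lia | by [] | by move=> ? ? ?; constructor].
Qed.

End composition.
Section dissim_composition.
Variables (R : realType) (T : Type) (s : T -> T -> R) (g d : seq T -> R).
Hypotheses (s_sane : sane s) (g_CL : gap_CL g) (d_CL : gap_CL d).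
Hypothesis gap_mismatch : forall a b, g [:: b] - g [:: a] <= mismatch s a b.
Hypothesis del_mismatch :
  forall a b, s a a + d [:: a] - s b b - d [:: b] <= mismatch s a b.

Local Notation dissim := (dissim s g d).
Local Notation mismatch := (mismatch s).
Local Notation del_pen := (del_pen s d).
Local Notation cost := (cost mismatch del_pen g).
Local Notation alignment := (seq (column T)).

Let g_gap : gap_penalty g. Proof. by case: g_CL. Qed.
Let del_pen_CL : gap_CL del_pen. Proof. exact: gap_CL_del_pen. Qed.
Let del_pen_gap : gap_penalty del_pen. Proof. by case: del_pen_CL. Qed.

(* The letters of [src g1] are deleted by [g1] or matched to letters that [g2]
   deletes; the latter are exchanged for the former one at a time, at the price
   of the matches.  Symmetrically for [tgt g2]. *)
Lemma unlinked_gap_le (g1 g2 : alignment) : unlinked g1 g2 ->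
  gap0 del_pen (src g1) + gap0 g (tgt g2) <= cost g1 + cost g2.
Proof.
move=> U; have [r1 P1] := unlinked_matched_deleted U.
have [r2 P2] := unlinked_matched_inserted U.
have := cost_from_ge mismatch del_pen_gap g_gap g1 [::] [::].
have := cost_from_ge mismatch del_pen_gap g_gap g2 [::] [::]; rewrite /= => L2 L1.
have D1 : gap0 del_pen (src g1)
    <= gap0 del_pen (deleted g1) + gap0 del_pen (map fst (matched g1)).
  by rewrite (gap0_Permutation del_pen_CL (src_Permutation g1)) gap0_cat_le.
have D2 : gap0 del_pen (map fst (matched g1))
    <= gap0 del_pen (map snd (matched g1)) + \sum_(q <- matched g1) mismatch q.1 q.2.
  apply: gap0_map_le del_pen_CL _ => q.
  by rewrite /del_pen /selfscore !big_seq1; have := del_mismatch q.1 q.2; lra.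
have D3 := gap0_Permutation_le del_pen_CL P1.
have I1 : gap0 g (tgt g2) <= gap0 g (inserted g2) + gap0 g (map snd (matched g2)).
  by rewrite (gap0_Permutation g_CL (tgt_Permutation g2)) gap0_cat_le.
have I2 : gap0 g (map snd (matched g2))
    <= gap0 g (map fst (matched g2)) + \sum_(q <- matched g2) mismatch q.1 q.2.
  by apply: gap0_map_le g_CL _ => q; apply: gap_mismatch.
have I3 := gap0_Permutation_le g_CL P2.
rewrite /cost; lra.
Qed.

Lemma dissim_unlinked_le (g1 g2 : alignment) : unlinked g1 g2 ->
  dissim (src g1) (tgt g2) <= cost g1 + cost g2.
Proof. by move/unlinked_gap_le; apply: le_trans; apply: dissim_le_gaps. Qed.

Lemma dissim_cat_Mat_le x1 a x2 z1 c z2 :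
  dissim (x1 ++ a :: x2) (z1 ++ c :: z2) <= dissim x1 z1 + mismatch a c + dissim x2 z2.
Proof.
have [c1 [<- <- H1]] := exists_alignment s_sane g_gap d_CL x1 z1.
have [c2 [<- <- H2]] := exists_alignment s_sane g_gap d_CL x2 z2.
have := dissim_le_cost s g_gap d_CL (c1 ++ Mat a c :: c2).
by rewrite src_cat tgt_cat /cost cost_from_cat_Mat -/(cost c1) /=; lra.
Qed.

Lemma dissim_compose_le A B (c1 c2 : alignment) : 1 <= A -> 1 <= B -> tgt c1 = src c2 ->
  (forall a b c, List.In (Mat a b) c1 -> List.In (Mat b c) c2 ->
     mismatch a c <= A * mismatch a b + B * mismatch b c) ->
  dissim (src c1) (tgt c2) <= A * cost c1 + B * cost c2.
Proof.
move=> A1 B1.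
have cost_ge0 (c : alignment) : 0 <= cost c.
  exact: cost_from_ge0 del_pen_gap g_gap (mismatch_ge0 s_sane) c [::] [::].
have weigh (c c' : alignment) : cost c <= A * cost c /\ cost c' <= B * cost c'.
  by split; apply: ler_peMl.
move: {2}(size c1 + size c2)%N (leqnn (size c1 + size c2)) => n.
elim: n c1 c2 => [|n IH] c1 c2 Hn Ht Hw.
  case: c1 c2 Hn {Ht Hw} => [|? ?] [|? ?] // _.
  by rewrite dissim_nil addr_ge0 ?mulr_ge0 ?cost_ge0 // (le_trans ler01).
case: (unlinked_or_linked Ht) => [U | [g1 [g2 [a [b [c [r1 [r2 [E1 E2 U]]]]]]]]].
  by apply: le_trans (dissim_unlinked_le U) _; have [] := weigh c1 c2; lra.
have Hr : tgt r1 = src r2.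
  have := congr1 (drop (size (tgt g1))) Ht.
  by rewrite E1 E2 src_cat tgt_cat (unlinked_tgt_src U) !drop_size_cat // => -[].
have Habc : mismatch a c <= A * mismatch a b + B * mismatch b c.
  by apply: Hw; rewrite ?E1 ?E2; apply: List.in_or_app; right; left.
have IHr : dissim (src r1) (tgt r2) <= A * cost r1 + B * cost r2.
  apply: IH Hr _; first by move: Hn; rewrite E1 E2 !size_cat /=; lia.
  by move=> a' b' c' I1 I2; apply: Hw; rewrite ?E1 ?E2; apply: List.in_or_app; right; right.
rewrite E1 E2 src_cat tgt_cat /=; apply: le_trans (dissim_cat_Mat_le _ _ _ _ _ _) _.
have := dissim_unlinked_le U; have [] := weigh g1 g2.
by rewrite /cost !cost_from_cat_Mat -!/(cost _); lra.
Qed.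

Lemma dissim_triangle_weighted A B x y z : 1 <= A -> 1 <= B ->
  (forall a b c, mismatch a c <= A * mismatch a b + B * mismatch b c) ->
  dissim x z <= A * dissim x y + B * dissim y z.
Proof.
move=> A1 B1 Hw.
have [c1 [<- Ht1 H1]] := exists_alignment s_sane g_gap d_CL x y.
have [c2 [Hs2 <- H2]] := exists_alignment s_sane g_gap d_CL y z.
apply: le_trans (dissim_compose_le A1 B1 _ (fun a b c _ _ => Hw a b c)) _.
  by rewrite Ht1 Hs2.
by apply: lerD; apply: ler_wpM2l => //; apply: le_trans ler01 _.
Qed.

Lemma exists_null_alignment x y : dissim x y = 0 ->
  exists c, [/\ src c = x, tgt c = y, cost c <= 0 & null_alignment mismatch c].
Proof.
move=> xy0; have [c [Hs Ht Hc]] := exists_alignment s_sane g_gap d_CL x y.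
rewrite xy0 in Hc; have [_ _ Nc] := cost_from_le0 del_pen_gap g_gap (mismatch_ge0 s_sane) Hc.
by exists c.
Qed.

Lemma dissim_triangle_null_l x y z : dissim x y = 0 ->
  (forall a b c, mismatch a b = 0 -> mismatch a c <= mismatch b c) ->
  dissim x z <= dissim y z.
Proof.
move=> /exists_null_alignment[c1 [<- Ht1 H1 N1]] Hw.
have [c2 [Hs2 <- H2]] := exists_alignment s_sane g_gap d_CL y z.
have Hw' a b c : List.In (Mat a b) c1 -> List.In (Mat b c) c2 ->
    mismatch a c <= 1 * mismatch a b + 1 * mismatch b c.
  by move=> /(null_alignment_In N1) ab0 _; rewrite ab0 !mul1r add0r Hw.
have := dissim_compose_le (lexx 1) (lexx 1) _ Hw'; rewrite Ht1 Hs2 !mul1r => /(_ erefl).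
by move/le_trans; apply; lra.
Qed.

Lemma dissim_triangle_null_r x y z : dissim y z = 0 ->
  (forall a b c, mismatch b c = 0 -> mismatch a c <= mismatch a b) ->
  dissim x z <= dissim x y.
Proof.
move=> /exists_null_alignment[c2 [Hs2 <- H2 N2]] Hw.
have [c1 [<- Ht1 H1]] := exists_alignment s_sane g_gap d_CL x y.
have Hw' a b c : List.In (Mat a b) c1 -> List.In (Mat b c) c2 ->
    mismatch a c <= 1 * mismatch a b + 1 * mismatch b c.
  by move=> _ /(null_alignment_In N2) bc0; rewrite bc0 !mul1r addr0 Hw.
have := dissim_compose_le (lexx 1) (lexx 1) _ Hw'; rewrite Ht1 Hs2 !mul1r => /(_ erefl).
by move/le_trans; apply; lra.
Qed.

Lemma dissim_eq0_antisym x y : (forall a b, mismatch a b = 0 -> mismatch b a = 0 -> a = b) ->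
  dissim x y = 0 -> dissim y x = 0 -> x = y.
Proof.
move=> antisym /exists_null_alignment[c1 [<- <- _ N1]].
move=> /exists_null_alignment[c2 [Hs2 Ht2 _ N2]].
apply: Forall2_antisym antisym (null_alignment_Forall2 N1) _.
by rewrite -Hs2 -Ht2; apply: null_alignment_Forall2.
Qed.

End dissim_composition.
Section lp_triangle.
Variables (R : realType) (T : Type) (p : R) (s : T -> T -> R).
Hypotheses (p_ge1 : 1 <= p) (s_sane : sane s).
Hypothesis dist_triangle : forall a b c,
  powR (mismatch s a c) p^-1 <= powR (mismatch s a b) p^-1 + powR (mismatch s b c) p^-1.

Let p_gt0 : 0 < p. Proof. exact: lt_le_trans ltr01 p_ge1. Qed.

Lemma mismatch_le_powR a b c : mismatch s a c
  <= powR (powR (mismatch s a b) p^-1 + powR (mismatch s b c) p^-1) p.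
Proof.
rewrite -[leLHS](powRVK p_gt0 (mismatch_ge0 s_sane a c)).
by apply: ge0_ler_powR; rewrite ?(ltW p_gt0) ?nnegrE ?addr_ge0 ?powR_ge0.
Qed.

Lemma mismatch_triangle_null_l a b c :
  mismatch s a b = 0 -> mismatch s a c <= mismatch s b c.
Proof.
move=> ab0; have := mismatch_le_powR a b c.
by rewrite ab0 powR0V // add0r powRVK // mismatch_ge0.
Qed.

Lemma mismatch_triangle_null_r a b c :
  mismatch s b c = 0 -> mismatch s a c <= mismatch s a b.
Proof.
move=> bc0; have := mismatch_le_powR a b c.
by rewrite bc0 powR0V // addr0 powRVK // mismatch_ge0.
Qed.

Lemma mismatch_triangle_weighted u v a b c : 0 < u -> 0 < v ->
  mismatch s a c <= powR ((u + v) / u) (p - 1) * mismatch s a b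
                    + powR ((u + v) / v) (p - 1) * mismatch s b c.
Proof.
move=> u0 v0; apply: le_trans (mismatch_le_powR a b c) _.
by rewrite -{2}(powRVK p_gt0 (mismatch_ge0 s_sane a b)) -{2}(powRVK p_gt0 (mismatch_ge0 s_sane b c))
  powR_addr_le ?powR_ge0.
Qed.

Variables (g d : seq T -> R).
Hypotheses (g_CL : gap_CL g) (d_CL : gap_CL d).
Hypothesis gap_mismatch : forall a b, g [:: b] - g [:: a] <= mismatch s a b.
Hypothesis del_mismatch :
  forall a b, s a a + d [:: a] - s b b - d [:: b] <= mismatch s a b.

Local Notation dissim := (dissim s g d).

Lemma dissim_powR_triangle x y z :
  powR (dissim x z) p^-1 <= powR (dissim x y) p^-1 + powR (dissim y z) p^-1.
Proof.
have g_gap : gap_penalty g by case: g_CL.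
have root_le u v : 0 <= u -> u <= v -> powR u p^-1 <= powR v p^-1.
  by move=> u0 uv; apply: ge0_ler_powR; rewrite ?invr_ge0 ?(ltW p_gt0) ?nnegrE ?(le_trans u0).
have [xy0|xy_neq0] := eqVneq (dissim x y) 0.
  rewrite xy0 powR0V // add0r; apply: root_le; first exact: dissim_ge0.
  apply: (dissim_triangle_null_l s_sane g_CL d_CL gap_mismatch del_mismatch z xy0).
  exact: mismatch_triangle_null_l.
have [yz0|yz_neq0] := eqVneq (dissim y z) 0.
  rewrite yz0 powR0V // addr0; apply: root_le; first exact: dissim_ge0.
  apply: (dissim_triangle_null_r s_sane g_CL d_CL gap_mismatch del_mismatch x yz0).
  exact: mismatch_triangle_null_r.
set u := powR (dissim x y) p^-1; set v := powR (dissim y z) p^-1.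
have u0 : 0 < u by rewrite powR_gt0 // lt0r xy_neq0 dissim_ge0.
have v0 : 0 < v by rewrite powR_gt0 // lt0r yz_neq0 dissim_ge0.
rewrite -(powRKV p_gt0 (addr_ge0 (ltW u0) (ltW v0))); apply: root_le; first exact: dissim_ge0.
rewrite -powR_ratio_sum // !powRVK ?dissim_ge0 //.
apply: (dissim_triangle_weighted s_sane g_CL d_CL gap_mismatch del_mismatch).
- exact: powR_ratio_ge1 (ltW v0).
- by rewrite addrC; apply: powR_ratio_ge1 (ltW u0).
- by move=> a b c; apply: mismatch_triangle_weighted.
Qed.

End lp_triangle.
Theorem corollary4p7 (R : realType) (Sigma : Type) (p : R)
  (s : Sigma -> Sigma -> R) (gamma delta : seq Sigma -> R) :
  1 <= p ->
  sane s ->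
  is_quasimetric (fun a b : Sigma => powR (s a a - s a b) p^-1) ->
  gap_CL gamma -> gap_CL delta ->
  (forall a b : Sigma,
     gamma [:: b] - gamma [:: a] <= powR (powR (s a a - s a b) p^-1) p /\
     s a a + delta [:: a] - s b b - delta [:: b]
       <= powR (powR (s a a - s a b) p^-1) p) ->
  let d := fun a b : Sigma => powR (s a a - s a b) p^-1 in
  let S := globalS s gamma delta in
  let alpha := fun x : seq Sigma => powR (gamma x) p^-1 in
  let beta := fun x : seq Sigma => powR (S x x + delta x) p^-1 in
  let D := lp_edit p d alpha beta in
  is_quasimetric D /\ (forall x y : seq Sigma, D x y = powR (S x x - S x y) p^-1).
Proof.
move=> p1 s_sane [_ d_sep d_tri] g_CL d_CL penalty_lip d S alpha beta D.
have p0 : 0 < p := lt_le_trans ltr01 p1.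
have [g_gap d_gap] : gap_penalty gamma /\ gap_penalty delta by case: g_CL; case: d_CL.
have mismatchE a b : powR (powR (s a a - s a b) p^-1) p = mismatch s a b.
  exact: powRVK p0 (mismatch_ge0 s_sane a b).
have gap_mismatch a b : gamma [:: b] - gamma [:: a] <= mismatch s a b.
  by rewrite -mismatchE; case: (penalty_lip a b).
have del_mismatch a b : s a a + delta [:: a] - s b b - delta [:: b] <= mismatch s a b.
  by rewrite -mismatchE; case: (penalty_lip a b).
have DS x y : D x y = powR (S x x - S x y) p^-1 by apply: lp_edit_globalS.
have DE x y : D x y = powR (dissim s gamma delta x y) p^-1.
  by rewrite DS /S globalS_diag.
split => //; split.
- by move=> x y; rewrite DE powR_ge0.
- move=> x y; split => [[]|->]; last by rewrite DS subrr powR0V.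
  rewrite !DE => /powR_eq0_eq0 xy0 /powR_eq0_eq0 yx0.
  apply: (dissim_eq0_antisym s_sane g_CL d_CL _ xy0 yx0).
  move=> a b ab0 ba0; apply/d_sep.
  by rewrite /d -/(mismatch s a b) -/(mismatch s b a) ab0 ba0 powR0V.
- move=> x y z; rewrite !DE.
  exact: (dissim_powR_triangle p1 s_sane d_tri g_CL d_CL gap_mismatch del_mismatch).
Qed.
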